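(* Let $r$ be a positive integer with $r\le n_i$ for all $i$, and let $T=\sum_{j=1}^r e_1^j\otimes\cdots\otimes e_d^j$. The stabilizer $H=\{g\in G: g\cdot T=T\}$ consists exactly of the elements $$h = \begin{bmatrix} D_1Q & M_1\\ 0 & A_1\end{bmatrix}\times\cdots\times\begin{bmatrix} D_dQ & M_d\\ 0 & A_d\end{bmatrix}$$ (block sizes $r$ and $n_i-r$), where $D_1,\dots,D_d$ are invertible diagonal $r\times r$ matrices with $D_1D_2\cdots D_d=I$, $Q$ is an $r\times r$ permutation matrix (the same in every factor), the $A_i$ are invertible $(n_i-r)\times(n_i-r)$ matrices, and the $M_i$ are arbitrary $r\times(n_i-r)$ matrices.
   Context: Fix integers $d\ge 3$ and $n_1,\dots,n_d\ge 2$. $V=\mathbb{R}^{n_1}\otimes\cdots\otimes\mathbb{R}^{n_d}$, and $G=\mathrm{GL}(n_1)\times\cdots\times\mathrm{GL}(n_d)$ (real invertible matrices) acts on $V$ by $(g_1,\dots,g_d)\cdot(v_1\otimes\cdots\otimes v_d)=(g_1v_1)\otimes\cdots\otimes(g_dv_d)$, extended linearly. $e_i^1,\dots,e_i^{n_i}$ is the standard basis of $\mathbb{R}^{n_i}$. *)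

From HB Require Import structures.
From mathcomp Require Import all_boot all_order all_algebra.
From mathcomp Require Import perm.
From mathcomp Require Import reals.
Set Implicit Arguments. Unset Strict Implicit. Unset Printing Implicit Defensive.
Import GRing.Theory.
Local Open Scope ring_scope.

Definition midx (d : nat) (n : 'I_d -> nat) := {dffun forall i : 'I_d, 'I_(n i)}.

(* V = R^{n_1} (x) ... (x) R^{n_d}, identified with coordinate arrays in the
   basis e_1^{k_1} (x) ... (x) e_d^{k_d}. *)
Definition tensor (R : realType) (d : nat) (n : 'I_d -> nat) := {ffun midx n -> R}.

(* Action of (g_1,...,g_d): linear extension of
   v_1 (x) ... (x) v_d |-> (g_1 v_1) (x) ... (x) (g_d v_d). *)
Definition tact (R : realType) (d : nat) (n : 'I_d -> nat)
  (g : forall i : 'I_d, 'M[R]_(n i)) (T : tensor R n) : tensor R n :=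
  [ffun k : midx n => \sum_(l : midx n) (\prod_(i < d) g i (k i) (l i)) * T l].

(* T = sum_{j=1}^r e_1^j (x) ... (x) e_d^j  (basis vectors indexed from 0). *)
Definition diag_tensor (R : realType) (d : nat) (n : 'I_d -> nat) (r : nat)
  : tensor R n :=
  [ffun k : midx n => \sum_(j < r) \prod_(i < d) ((nat_of_ord (k i) == j)%:R : R)].

From HB Require Import structures.
From mathcomp Require Import all_boot all_order all_algebra.
From mathcomp Require Import perm.
From mathcomp Require Import reals.
Import GRing.Theory.
Set Implicit Arguments. Unset Strict Implicit. Unset Printing Implicit Defensive.
Local Open Scope ring_scope.

(* Contracting g.T = T with the
   rows p_i of g_i^-1 for i <> c expresses column q < r of g_c through entries of
   the other inverses: it vanishes below row r, and since d >= 3 two of the other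
   factors can be mixed, which shows that two entries in one row of the top-left
   r x r block always multiply to 0.  Invertibility then makes that block
   monomial, with a pivot permutation for each factor; evaluating g.T = T at the
   multi-index of the pivots forces all permutations to agree and the diagonal
   entries to multiply to 1.  The converse is a direct computation. *)

Lemma bigA_distr_dffun (R : comNzRingType) (I : finType) (T_ : I -> finType)
    (F : forall i, T_ i -> R) :
  \sum_(t : {dffun forall i, T_ i}) \prod_i F i (t i) = \prod_i \sum_(x : T_ i) F i x.
Proof.
rewrite (reindex (@dffun_of_fprod I T_)); last exact/onW_bij/dffun_of_fprod_bij.
transitivity (\sum_t \prod_(i in I) [ffun x => F i x] (fun_of_fprod t i)).
  apply: eq_bigr => t _; apply: eq_bigr => i _.
  by rewrite /dffun_of_fprod !ffunE.
rewrite big_fprod; symmetry.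
transitivity (\prod_i \sum_(x in tagged_with T_ i) untag 0 [ffun y => F i y] x).
  apply: eq_bigr => i _; rewrite -(big_tag (fun i x => [ffun y => F i y] x)).
  by apply: eq_bigr => x _; rewrite ffunE.
by rewrite bigA_distr_big_dep.
Qed.

Lemma sum_mul_eq_nat (R : nzSemiRingType) m r (hr : (r <= m)%N)
    (F : 'I_m -> R) (j : 'I_r) :
  \sum_(x < m) F x * (x == j :> nat)%:R = F (widen_ord hr j).
Proof.
rewrite (bigD1 (widen_ord hr j)) //= eqxx mulr1 big1 ?addr0 // => x xj.
rewrite (_ : (x == j :> nat) = false) ?mulr0 //.
by apply: contraNF xj => /eqP xj; apply/eqP/val_inj.
Qed.

Lemma sum_nat_eq_mul (R : nzSemiRingType) r (F : 'I_r -> R) (j0 : 'I_r) :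
  \sum_(j < r) (j0 == j :> nat)%:R * F j = F j0.
Proof.
rewrite (bigD1 j0) //= eqxx mul1r big1 ?addr0 // => j ji.
by rewrite (_ : (j0 == j :> nat) = false) ?mul0r //; apply/negbTE; rewrite eq_sym.
Qed.

Lemma exists_neq2 d (hd : (2 < d)%N) (b c : 'I_d) : exists e : 'I_d, (e != b) && (e != c).
Proof.
have : (0 < #|~: [set b; c]|)%N.
  rewrite -(ltn_add2l #|[set b; c]|) cardsC card_ord addn0.
  by apply: leq_ltn_trans hd; rewrite cards2; case: (b != c).
by case/card_gt0P => e; rewrite in_setC in_set2 negb_or; exists e.
Qed.

Lemma big_mulmx_diag (R : comNzRingType) m k (F : 'I_m -> 'rV[R]_k) :
  \big[mulmx/1%:M]_(i < m) diag_mx (F i) = diag_mx (\row_j \prod_(i < m) F i 0 j).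
Proof.
elim: m F => [|m IH] F.
  rewrite big_ord0 -diag_const_mx; congr diag_mx.
  by apply/matrixP => a b; rewrite !mxE big_ord0.
rewrite big_ord_recl IH mulmx_diag; congr diag_mx.
by apply/matrixP => a b; rewrite !mxE big_ord_recl.
Qed.

Lemma diag_mx_eq1 (R : nzRingType) k (v : 'rV[R]_k) :
  diag_mx v = 1%:M <-> forall j, v 0 j = 1.
Proof.
split=> [/matrixP v1 j | v1]; first by have := v1 j j; rewrite !mxE eqxx.
by rewrite -diag_const_mx; congr diag_mx; apply/matrixP => a b; rewrite !mxE ord1 v1.
Qed.

Lemma mulVmx_entry (R : comUnitRingType) m (A : 'M[R]_m) (a b : 'I_m) :
  A \in unitmx -> \sum_x invmx A a x * A x b = (a == b)%:R.
Proof. by move=> /mulVmx/matrixP/(_ a b); rewrite !mxE. Qed.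

Definition blockify m r (hr : (r <= m)%N) R (G : 'M[R]_m) : 'M[R]_(r + (m - r)) :=
  castmx (esym (subnKC hr), esym (subnKC hr)) G.

Section MonomialBlock.
Variables (R : nzRingType) (m r : nat) (hr : (r <= m)%N) (D : 'rV[R]_r) (Q : 'S_r).

Lemma block_monomial_colE (M : 'M[R]_(r, m - r)) (A : 'M[R]_(m - r)) a j :
  castmx (subnKC hr, subnKC hr) (block_mx (diag_mx D *m perm_mx Q) M 0 A)
    a (widen_ord hr j)
  = D 0 ((Q^-1)%g j) * (a == (Q^-1)%g j :> nat)%:R.
Proof.
rewrite castmxE /=.
have -> : cast_ord (esym (subnKC hr)) (widen_ord hr j) = lshift (m - r) j.
  exact: val_inj.
set a' := cast_ord _ a; have a'E : a' = a :> nat by [].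
case: (splitP a') => [a1 a1E | a2 a2E].
  rewrite (_ : a' = lshift (m - r) a1); last exact: val_inj.
  rewrite block_mxEul mul_diag_mx !mxE -a'E a1E.
  have [<- | Qa1j] := eqVneq (Q a1) j; first by rewrite permK !eqxx.
  rewrite (_ : (a1 == (Q^-1)%g j :> nat) = false) ?mulr0 //.
  by apply: contraNF Qa1j => /eqP/val_inj ->; rewrite permKV.
rewrite (_ : a' = rshift r a2); last exact: val_inj.
rewrite block_mxEdl mxE (_ : (a == (Q^-1)%g j :> nat) = false) ?mulr0 //.
by apply: contraTF (ltn_ord ((Q^-1)%g j)) => /eqP <-; rewrite -a'E a2E -leqNgt leq_addr.
Qed.

Lemma block_monomialE (G : 'M[R]_m) :
    (forall a j, G a (widen_ord hr j) = D 0 ((Q^-1)%g j) * (a == (Q^-1)%g j :> nat)%:R) ->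
  G = castmx (subnKC hr, subnKC hr)
        (block_mx (diag_mx D *m perm_mx Q)
                  (ursubmx (blockify hr G)) 0 (drsubmx (blockify hr G))).
Proof.
move=> Gcol; rewrite -[LHS](castmxKV (subnKC hr) (subnKC hr)).
congr castmx; rewrite -[LHS]submxK; congr block_mx.
  apply/matrixP => a b; rewrite mul_diag_mx !mxE castmxE.
  rewrite (_ : cast_ord _ (lshift _ b) = widen_ord hr b); last exact: val_inj.
  rewrite Gcol /=; have [<- | Qab] := eqVneq (Q a) b; first by rewrite permK !eqxx.
  rewrite (_ : (a == (Q^-1)%g b :> nat) = false) ?mulr0 //.
  by apply: contraNF Qab => /eqP/val_inj ->; rewrite permKV.
apply/matrixP => a b; rewrite !mxE castmxE.
rewrite (_ : cast_ord _ (lshift _ b) = widen_ord hr b); last exact: val_inj.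
rewrite Gcol /= (_ : (r + a == (Q^-1)%g b :> nat) = false) ?mulr0 //.
by apply: contraTF (ltn_ord ((Q^-1)%g b)) => /eqP <-; rewrite -leqNgt leq_addr.
Qed.

End MonomialBlock.

Lemma unitmx_castmx_block (R : comUnitRingType) m r (hr : (r <= m)%N)
    (X : 'M[R]_r) (M : 'M[R]_(r, m - r)) (A : 'M[R]_(m - r)) :
  (castmx (subnKC hr, subnKC hr) (block_mx X M 0 A) \in unitmx)
  = (X \in unitmx) && (A \in unitmx).
Proof.
have unitmx_cast p (e : (r + (m - r))%N = p) (B : 'M[R]_(r + (m - r))) :
    (castmx (e, e) B \in unitmx) = (B \in unitmx) by case: p / e.
by rewrite unitmx_cast unitmxE det_ublock unitrM -!unitmxE.
Qed.

Section OuterSums.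
Variables (R : realType) (d : nat) (n : 'I_d -> nat).

Definition outer_sum {r} (u : forall i : 'I_d, 'I_r -> 'I_(n i) -> R) : tensor R n :=
  [ffun k : midx n => \sum_(j < r) \prod_i u i j (k i)].

Definition contract (F : forall i : 'I_d, 'I_(n i) -> R) (X : tensor R n) : R :=
  \sum_(k : midx n) (\prod_i F i (k i)) * X k.

Lemma contract_outer_sum r F (u : forall i : 'I_d, 'I_r -> 'I_(n i) -> R) :
  contract F (outer_sum u) = \sum_(j < r) \prod_i \sum_x F i x * u i j x.
Proof.
rewrite /contract; under eq_bigr do rewrite ffunE big_distrr.
rewrite exchange_big; apply: eq_bigr => j _ /=.
under eq_bigr do rewrite -big_split /=.
by rewrite (bigA_distr_dffun (fun i x => F i x * u i j x)).
Qed.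

Lemma tactE (g : forall i : 'I_d, 'M[R]_(n i)) X k :
  tact g X k = contract (fun i => g i (k i)) X.
Proof. by rewrite ffunE. Qed.

Lemma diag_tensorE r :
  diag_tensor R n r = outer_sum (fun i (j : 'I_r) (x : 'I_(n i)) => (x == j :> nat)%:R).
Proof. by []. Qed.

Lemma tact_diag_tensor r (hr : forall i, (r <= n i)%N) (g : forall i : 'I_d, 'M[R]_(n i)) :
  tact g (diag_tensor R n r) = outer_sum (fun i j x => g i x (widen_ord (hr i) j)).
Proof.
apply/ffunP => k; rewrite tactE diag_tensorE contract_outer_sum ffunE.
by apply: eq_bigr => j _; apply: eq_bigr => i _; rewrite sum_mul_eq_nat.
Qed.

End OuterSums.

Section Stabilizer.
Variables (R : realType) (d : nat) (n : 'I_d -> nat) (r : nat).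
Hypotheses (hd : (2 < d)%N) (hr : forall i, (r <= n i)%N).
Local Notation wid i j := (widen_ord (hr i) j).
Variable g : forall i : 'I_d, 'M[R]_(n i).
Hypotheses (g_unit : forall i, g i \in unitmx)
           (g_stab : tact g (diag_tensor R n r) = diag_tensor R n r).

Lemma stab_contract F :
  \sum_(j < r) \prod_i \sum_x F i x * g i x (wid i j) = \sum_(j < r) \prod_i F i (wid i j).
Proof.
have := congr1 (contract F) g_stab.
rewrite tact_diag_tensor diag_tensorE !contract_outer_sum => ->.
by apply: eq_bigr => j _; apply: eq_bigr => i _; rewrite sum_mul_eq_nat.
Qed.

Lemma stab_slice c (p : 'I_d -> 'I_r) (m : 'I_(n c)) :
  \sum_(j < r) g c m (wid c j) * \prod_(i | i != c) ((p i == j)%:R : R)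
  = \sum_(j < r) (m == j :> nat)%:R *
      \prod_(i | i != c) invmx (g i) (wid i (p i)) (wid i j).
Proof.
pose F i (x : 'I_(n i)) : R :=
  if i == c then (x == m :> nat)%:R else invmx (g i) (wid i (p i)) x.
transitivity (\sum_(j < r) \prod_i \sum_x F i x * g i x (wid i j)).
  apply: eq_bigr => j _; rewrite [RHS](bigD1 c) //= /F eqxx; congr (_ * _).
    rewrite (bigD1 m) //= eqxx mul1r big1 ?addr0 // => x xm.
    by rewrite (_ : (x == m :> nat) = false) ?mul0r //; exact/negbTE.
  by apply: eq_bigr => i /negbTE ic; rewrite ic mulVmx_entry.
rewrite stab_contract; apply: eq_bigr => j _.
rewrite (bigD1 c) //= /F eqxx eq_sym; congr (_ * _).
by apply: eq_bigr => i /negbTE ->.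
Qed.

Lemma stab_col c (q : 'I_r) (m : 'I_(n c)) :
  g c m (wid c q)
  = \sum_(j < r) (m == j :> nat)%:R * \prod_(i | i != c) invmx (g i) (wid i q) (wid i j).
Proof.
rewrite -(stab_slice (fun=> q) m) (bigD1 q) //= big1 ?mulr1 => [|i _]; last first.
  by rewrite eqxx.
rewrite big1 ?addr0 // => j qj; have [e /andP[_ ec]] := exists_neq2 hd c c.
by rewrite (bigD1 e) //= eq_sym (negbTE qj) mul0r mulr0.
Qed.

Lemma stab_col_low c q (m : 'I_(n c)) : (r <= m)%N -> g c m (wid c q) = 0.
Proof.
move=> rm; rewrite stab_col big1 // => j _.
rewrite (_ : (m == j :> nat) = false) ?mul0r //.
by apply: contraTF rm => /eqP ->; rewrite -ltnNge.
Qed.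

Lemma stab_col_top c q (m : 'I_r) :
  g c (wid c m) (wid c q) = \prod_(i | i != c) invmx (g i) (wid i q) (wid i m).
Proof. by rewrite stab_col sum_nat_eq_mul. Qed.

Lemma stab_mixed_prod c b (q q' m : 'I_r) : b != c -> q != q' ->
  \prod_(i | i != c) invmx (g i) (wid i (if i == b then q' else q)) (wid i m) = 0.
Proof.
move=> bc qq'; have := stab_slice (fun i => if i == b then q' else q) (wid c m).
rewrite sum_nat_eq_mul => <-; rewrite big1 // => j _.
have [<- | q'j] := eqVneq q' j.
  have [e /andP[eb ec]] := exists_neq2 hd b c.
  by rewrite (bigD1 e) //= (negbTE eb) (negbTE qq') mul0r mulr0.
by rewrite (bigD1 b) //= eqxx (negbTE q'j) mul0r mulr0.
Qed.

Lemma stab_row_mul0 c (m q q' : 'I_r) : q != q' ->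
  g c (wid c m) (wid c q) * g c (wid c m) (wid c q') = 0.
Proof.
(* Exchanging the factors of index b regroups the product into two products of
   the shape killed by stab_mixed_prod. *)
move=> qq'; have [b /andP[bc _]] := exists_neq2 hd c c.
rewrite !stab_col_top -big_split /=.
rewrite (eq_bigr (fun i => invmx (g i) (wid i (if i == b then q' else q)) (wid i m)
           * invmx (g i) (wid i (if i == b then q else q')) (wid i m))); last first.
  by move=> i _; case: (i == b); rewrite // mulrC.
by rewrite big_split /= stab_mixed_prod // mul0r.
Qed.

Lemma stab_col_top_nz c q : exists m : 'I_r, g c (wid c m) (wid c q) != 0.
Proof.
apply/existsP; apply: contraT => /existsPn col0.
have := mulVmx_entry (wid c q) (wid c q) (g_unit c); rewrite eqxx big1 => [/esym/eqP|x _].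
  by rewrite oner_eq0.
have [xr | rx] := ltnP x r; last by rewrite stab_col_low ?mulr0.
rewrite (_ : x = wid c (Ordinal xr)); last exact: val_inj.
by move/negPn/eqP: (col0 (Ordinal xr)) => ->; rewrite mulr0.
Qed.

Definition stab_pivot c q := xchoose (stab_col_top_nz c q).

Lemma stab_pivot_nz c q : g c (wid c (stab_pivot c q)) (wid c q) != 0.
Proof. exact: xchooseP (stab_col_top_nz c q). Qed.

Lemma stab_pivot_inj c : injective (stab_pivot c).
Proof.
move=> q q' qq'; apply/eqP; apply: contraT => /(stab_row_mul0 c (stab_pivot c q))/eqP.
by rewrite mulf_eq0 {2}qq' !(negbTE (stab_pivot_nz _ _)).
Qed.

Lemma stab_col_support c q (a : 'I_(n c)) :
  (a != stab_pivot c q :> nat) -> g c a (wid c q) = 0.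
Proof.
move=> aq; have [ar | ra] := ltnP a r; last by rewrite stab_col_low.
pose s := perm (@stab_pivot_inj c); pose q' := (s^-1)%g (Ordinal ar).
have q'E : stab_pivot c q' = Ordinal ar.
  by rewrite /q' -[stab_pivot c _](permE (@stab_pivot_inj c)) permKV.
have qq' : q != q' by apply: contraNneq aq => ->; rewrite q'E.
rewrite (_ : a = wid c (stab_pivot c q')); last by apply: val_inj; rewrite q'E.
have /eqP := stab_row_mul0 c (stab_pivot c q') qq'.
by rewrite mulf_eq0 (negbTE (stab_pivot_nz c q')) orbF => /eqP.
Qed.

Let i0 : 'I_d := Ordinal (ltn_trans (isT : (0 < 2)%N) hd).

Lemma stab_eval j :
  \prod_i g i (wid i (stab_pivot i j)) (wid i j)
  = \sum_(j' < r) \prod_i ((stab_pivot i j == j')%:R : R).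
Proof.
pose k : midx n := [ffun i => wid i (stab_pivot i j)].
have kE i : k i = wid i (stab_pivot i j) by rewrite ffunE.
transitivity (\sum_(j' < r) \prod_i g i (k i) (wid i j')).
  rewrite (bigD1 j) //= [X in _ + X]big1 ?addr0 => [|j' j'j].
    by apply: eq_bigr => i _; rewrite kE.
  rewrite (bigD1 i0) //= kE stab_col_support ?mul0r //=.
  by apply: contra j'j => /eqP/val_inj/stab_pivot_inj ->.
have := congr1 (fun X : tensor R n => X k) g_stab.
rewrite tact_diag_tensor diag_tensorE ![outer_sum _ _]ffunE => ->.
by apply: eq_bigr => j' _; apply: eq_bigr => i _; rewrite kE.
Qed.

Lemma stab_pivot_const c c' j : stab_pivot c j = stab_pivot c' j.
Proof.
apply/eqP; apply: contraT => cc'.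
have : \prod_i g i (wid i (stab_pivot i j)) (wid i j) != 0.
  by apply/prodf_neq0 => i _; exact: stab_pivot_nz.
rewrite stab_eval big1 ?eqxx // => j' _.
have [<- | cj'] := eqVneq (stab_pivot c j) j'.
  by rewrite (bigD1 c') //= eq_sym (negbTE cc') mul0r.
by rewrite (bigD1 c) //= (negbTE cj') mul0r.
Qed.

Lemma stab_diag_prod j : \prod_i g i (wid i (stab_pivot i j)) (wid i j) = 1.
Proof.
rewrite stab_eval (bigD1 (stab_pivot i0 j)) //= big1 ?mul1r => [|i _]; last first.
  by rewrite (stab_pivot_const i i0) eqxx.
rewrite big1 ?addr0 // => j' j'j.
by rewrite (bigD1 i0) //= eq_sym (negbTE j'j) mul0r.
Qed.

Let s := perm (@stab_pivot_inj i0).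

Lemma stab_pivotE i q : stab_pivot i q = s q.
Proof. by rewrite permE (stab_pivot_const i i0). Qed.

Definition stab_diag i : 'rV[R]_r := \row_m g i (wid i m) (wid i ((s^-1)%g m)).

Lemma stab_colE i a q :
  g i a (wid i q) = stab_diag i 0 (((s^-1)^-1)%g q) * (a == ((s^-1)^-1)%g q :> nat)%:R.
Proof.
rewrite invgK mxE permK; have [aq | aq] := eqVneq (a : nat) (s q).
  by rewrite mulr1 (_ : a = wid i (s q)) //; exact: val_inj.
by rewrite mulr0 stab_col_support // stab_pivotE.
Qed.

Lemma stab_block_form :
  exists (D : 'I_d -> 'rV[R]_r) (Q : 'S_r)
         (A : forall i : 'I_d, 'M[R]_(n i - r))
         (M : forall i : 'I_d, 'M[R]_(r, n i - r)),
    [/\ forall i, diag_mx (D i) \in unitmx,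
        \big[mulmx/1%:M]_(i < d) diag_mx (D i) = 1%:M,
        forall i, A i \in unitmx
      & forall i, g i = castmx (subnKC (hr i), subnKC (hr i))
                      (block_mx (diag_mx (D i) *m perm_mx Q) (M i) 0 (A i))].
Proof.
have gE i := block_monomialE (@stab_colE i).
exists stab_diag, (s^-1)%g, (fun i => drsubmx (blockify (hr i) (g i))).
exists (fun i => ursubmx (blockify (hr i) (g i))); split=> // [i | | i].
- rewrite unitmxE det_diag unitfE; apply/prodf_neq0 => m _.
  by rewrite mxE -{1}[m](permKV s) -(stab_pivotE i); exact: stab_pivot_nz.
- rewrite big_mulmx_diag; apply/diag_mx_eq1 => m; rewrite mxE.
  rewrite -[RHS](stab_diag_prod ((s^-1)%g m)); apply: eq_bigr => i _.
  by rewrite mxE stab_pivotE permKV.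
- by have := g_unit i; rewrite {1}gE unitmx_castmx_block => /andP[_ ->].
Qed.

End Stabilizer.

Lemma monomial_stab (R : realType) d (n : 'I_d -> nat) r (hr : forall i, (r <= n i)%N)
    (g : forall i : 'I_d, 'M[R]_(n i)) (D : 'I_d -> 'rV[R]_r) (Q : 'S_r) :
    (forall i a j, g i a (widen_ord (hr i) j)
                   = D i 0 ((Q^-1)%g j) * (a == (Q^-1)%g j :> nat)%:R) ->
    (forall j, \prod_i D i 0 j = 1) ->
  tact g (diag_tensor R n r) = diag_tensor R n r.
Proof.
move=> gcol Dprod; rewrite tact_diag_tensor diag_tensorE; apply/ffunP => k; rewrite !ffunE.
under eq_bigr do rewrite (eq_bigr _ (fun i _ => gcol i (k i) _)) big_split /= Dprod mul1r.
by rewrite [RHS](reindex_inj (@perm_inj _ (Q^-1)%g)).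
Qed.

Theorem mainTheorem3 (R : realType) (d : nat) (n : 'I_d -> nat) (r : nat)
  (hd : (3 <= d)%N) (hn : forall i, (2 <= n i)%N)
  (hr0 : (0 < r)%N) (hr : forall i, (r <= n i)%N)
  (g : forall i : 'I_d, 'M[R]_(n i)) :
  ((forall i, g i \in unitmx) /\ tact g (diag_tensor R n r) = diag_tensor R n r)
  <->
  (exists (D : 'I_d -> 'rV[R]_r) (Q : 'S_r)
          (A : forall i : 'I_d, 'M[R]_(n i - r))
          (M : forall i : 'I_d, 'M[R]_(r, n i - r)),
     [/\ forall i, diag_mx (D i) \in unitmx,
         \big[mulmx/1%:M]_(i < d) diag_mx (D i) = 1%:M,
         forall i, A i \in unitmx
       & forall i, g i = castmx (subnKC (hr i), subnKC (hr i))
                       (block_mx (diag_mx (D i) *m perm_mx Q) (M i) 0 (A i))]).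
Proof.
split=> [[g_unit g_stab] | [D [Q [A [M [D_unit D_prod A_unit gE]]]]]].
  exact (stab_block_form hd hr g_unit g_stab).
split=> [i | ].
  by rewrite gE unitmx_castmx_block unitmx_mul D_unit unitmx_perm A_unit.
apply: (monomial_stab (D := D) (Q := Q)) => [i a j | j].
  by rewrite gE block_monomial_colE.
by move: D_prod; rewrite big_mulmx_diag => /diag_mx_eq1/(_ j); rewrite mxE.
Qed.
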